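(* Let $a>0$ be a constant and let $x\in\{0,1\}^n$ have exactly $(\frac12+a)n$ bits equal to $1$. Let $x^k$ denote the $k$-th bitstring sampled by the hypermutation operator on input $x$, $k=1,\dots,n$. Then for any $c=\omega(\sqrt{\log n/n})$ with $c\in(0,a)$, with probability $1-e^{-\Omega(nc^2)}$ there exists $k\in\{n\frac{a-c}{2a-c},\dots,n\frac{a}{2a-c}\}$ such that $x^k$ has exactly $n/2$ bits equal to $1$.
   Context: The hypermutation operator on input $x\in\{0,1\}^n$ (disregarding its stopping rule) flips the $n$ bit positions one at a time in a uniformly random order, i.e. according to a uniformly random permutation of $\{1,\dots,n\}$; the $k$-th sampled bitstring $x^k$ is the string obtained from $x$ after the first $k$ of these flips. Asymptotics are as $n\to\infty$. *)

From HB Require Import structures.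
From mathcomp Require Import all_boot all_order all_algebra all_fingroup.
From mathcomp Require Import all_classical all_reals all_analysis.
Set Implicit Arguments. Unset Strict Implicit. Unset Printing Implicit Defensive.
Import Order.TTheory GRing.Theory Num.Theory.
Local Open Scope ring_scope.

(* The hypermutation operator flips positions s 0, s 1, ..., s (n-1) in this
   order, for a uniformly random permutation s of 'I_n.  After k flips the set
   of flipped positions is {s j | j < k}. *)
Definition flipped (n : nat) (s : {perm 'I_n}) (k : nat) : {set 'I_n} :=
  [set s j | j : 'I_n & (j < k)%N].

Definition hyp_sample (n : nat) (x : {ffun 'I_n -> bool}) (s : {perm 'I_n})
  (k : nat) : {ffun 'I_n -> bool} :=
  [ffun i => x i (+) (i \in flipped s k)].

Definition ones (n : nat) (y : {ffun 'I_n -> bool}) : nat := #|[set i | y i]|.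

Definition prob_perm (R : realType) (n : nat) (E : pred {perm 'I_n}) : R :=
  (#|[set s | E s]|)%:R / (#|[set: {perm 'I_n}]|)%:R.

From HB Require Import structures.
From mathcomp Require Import all_boot all_order all_algebra all_fingroup.
From mathcomp Require Import all_classical all_reals all_analysis.
From mathcomp Require Import zify ring lra.
Import Order.TTheory GRing.Theory Num.Theory.
Local Open Scope ring_scope.
Set Implicit Arguments. Unset Strict Implicit. Unset Printing Implicit Defensive.

(* Let m be the number of ones of x and F_k the number of ones of x among the
   first k flipped positions.  Then x^k has k + m - 2 F_k ones, so this count
   moves by one at each step.  Given the first k flips, the next flipped
   position is a one of x with probability (m - F_k) / (n - k), which decreases
   with F_k; by Chebyshev's sum inequality the hypergeometric F_k therefore has
   exponential moments below the binomial ones, E (1 + z)^F_k <= (1 + z m/n)^k,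
   and Markov's inequality gives a Chernoff tail.  Applied to x at the left end
   k1 of the window and to the complement of x at its right end k2, it shows
   that except with probability 2 exp (- n c^2 / 256), x^k1 has more than n/2
   ones and x^k2 at most n/2; a discrete intermediate value argument then finds
   a k in between with exactly n/2 ones. *)

Lemma chebyshev_sum (R : realFieldType) (T : finType) (f g : T -> R) :
  (forall t t', (f t - f t') * (g t - g t') <= 0) ->
  #|T|%:R * \sum_t f t * g t <= (\sum_t f t) * (\sum_t g t).
Proof.
move=> opposite.
have cross : \sum_t \sum_t' f t * g t' = (\sum_t f t) * (\sum_t g t).
  by rewrite mulr_suml; apply: eq_bigr => t _; rewrite mulr_sumr.
have diag : \sum_t \sum_(t' : T) f t * g t = #|T|%:R * \sum_t f t * g t.
  by rewrite mulr_sumr; apply: eq_bigr => t _; rewrite sumr_const mulr_natl.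
have : 0 <= \sum_t \sum_t' (f t - f t') * (g t' - g t).
  by do 2![apply: sumr_ge0 => ? _]; rewrite -[g _ - g _]opprB mulrN oppr_ge0.
have -> : \sum_t \sum_t' (f t - f t') * (g t' - g t) =
    \sum_t \sum_t' f t * g t' + \sum_t \sum_t' f t' * g t
    - \sum_t \sum_(t' : T) f t * g t - \sum_(t : T) \sum_t' f t' * g t'.
  rewrite -big_split -!sumrB /=; apply: eq_bigr => t _.
  by rewrite -big_split -!sumrB; apply: eq_bigr => t' _ /=; ring.
rewrite [X in _ + X - _ - _]exchange_big [X in _ - X]exchange_big /=.
rewrite cross diag; lra.
Qed.

Lemma markov_card (R : realFieldType) (T : finType) (P : pred T) (f : T -> R) b :
  (forall t, 0 <= f t) -> (forall t, P t -> b <= f t) ->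
  #|[set t | P t]|%:R * b <= \sum_t f t.
Proof.
move=> f_ge0 Pf; rewrite -(sum1dep_card P) natr_sum mulr_suml [X in _ <= X](bigID P) /=.
rewrite -[X in X <= _]addr0 lerD ?sumr_ge0 //.
by apply: ler_sum => t /Pf; rewrite mul1r.
Qed.

Lemma expR_sub_sqr_le (R : realType) (z : R) : 0 <= z -> expR (z - z ^+ 2) <= 1 + z.
Proof.
move=> z_ge0; rewrite -opprB expRN -[_^-1]mul1r ler_pdivrMr ?expR_gt0 //.
apply: le_trans (ler_wpM2l (addr_ge0 ler01 z_ge0) (expR_ge1Dx _)); nra.
Qed.

Lemma two_expR_le (R : realType) (X : R) : 512 <= X ->
  2 * expR (- (X / 256)) <= expR (- (1 / 512 * X)).
Proof.
move=> X_ge; set e := expR (- (1 / 512 * X)).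
have -> : expR (- (X / 256)) = e * e by rewrite -expRD; congr expR; field.
have e_inv : e * expR (1 / 512 * X) = 1 by rewrite /e expRN mulVf ?gt_eqF ?expR_gt0.
have := expR_ge1Dx (1 / 512 * X); have := expR_gt0 (- (1 / 512 * X)); rewrite -/e.
nra.
Qed.

Lemma eventually_lt_mul_sqr (R : realType) (c : nat -> R) (K : R) :
  (forall M : R, 0 < M -> exists N : nat, forall n : nat, (N <= n)%N ->
      M * Num.sqrt (ln n%:R / n%:R) < c n) ->
  exists N : nat, forall n : nat, (N <= n)%N -> K < n%:R * c n ^+ 2.
Proof.
move=> omega; have ln2_gt0 : 0 < ln (2 : R) by rewrite ln_gt0 //; lra.
set M := 1 + `|K| / ln 2.
have M_ge1 : 1 <= M by rewrite lerDl divr_ge0 // ltW.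
have [N0 hN0] := omega M (lt_le_trans ltr01 M_ge1).
exists (maxn N0 2) => n; rewrite geq_max => /andP [N0n n2].
have n_ge2 : (2 : R) <= n%:R by rewrite ler_nat.
have ln_le : ln 2 <= ln (n%:R : R) by rewrite ler_ln ?posrE //; lra.
have r_ge0 : 0 <= ln (n%:R : R) / n%:R by rewrite divr_ge0 //; lra.
have sqrt_ge0 : 0 <= M * Num.sqrt (ln (n%:R : R) / n%:R).
  by rewrite mulr_ge0 ?sqrtr_ge0 //; lra.
have lt_c := hN0 n N0n; have c_ge0 := le_trans sqrt_ge0 (ltW lt_c).
move: lt_c; rewrite -(ltr_pXn2r (n := 2)) ?nnegrE //.
rewrite exprMn sqr_sqrtr // mulrA ltr_pdivrMr; last lra.
have : M * ln 2 <= M ^+ 2 * ln (n%:R : R) by rewrite expr2 -mulrA ler_wpM2l; nra.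
have : `|K| <= M * ln 2 by rewrite mulrDl mul1r divfK ?gt_eqF //; lra.
have := ler_norm K; lra.
Qed.

Lemma exists_eq_of_step_down (f : nat -> nat) v a b :
  (forall i, (a <= i < b)%N -> (f i <= (f i.+1).+1)%N) ->
  (a <= b)%N -> (v <= f a)%N -> (f b <= v)%N ->
  exists2 i, (a <= i <= b)%N & f i = v.
Proof.
elim: b => [|b IH] step ab va fb.
  move: ab; rewrite leqn0 => /eqP a0; rewrite a0 in va.
  by exists 0%N; rewrite ?a0 //; apply/eqP; rewrite eqn_leq fb va.
have [fbv|fbv] := eqVneq (f b.+1) v; first by exists b.+1; rewrite ?ab ?leqnn.
have ab' : (a <= b)%N.
  by move: ab; rewrite leq_eqVlt ltnS => /orP [/eqP ab|//]; move: va fb fbv; rewrite ab; lia.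
have fb' : (f b <= v)%N.
  by have := step b; rewrite ab' leqnn => /(_ isT); move: fb fbv; lia.
have [|i /andP [ai ib] fiv] := IH _ ab' va fb'.
  by move=> i /andP [ai ib]; apply: step; rewrite ai ltnW.
by exists i; rewrite // ai leqW.
Qed.

Lemma sum_ord_lt_const (R : nmodType) n k (x : R) : (k <= n)%N ->
  \sum_(j < n | (j < k)%N) x = x *+ k.
Proof. by move=> kn; rewrite -(big_ord_widen n (fun=> x) kn) sumr_const card_ord. Qed.

Lemma sum_ord_ge_const (R : zmodType) n k (x : R) : (k <= n)%N ->
  \sum_(j < n | ~~ (j < k)%N) x = x *+ (n - k).
Proof.
move=> kn; apply: (addrI (x *+ k)); rewrite -mulrnDr subnKC //.
have -> : x *+ n = \sum_(j < n) x by rewrite sumr_const card_ord.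
by rewrite [RHS](bigID (fun j : 'I_n => (j < k)%N)) /= sum_ord_lt_const.
Qed.

Lemma sum1_ord_lt n k : (k <= n)%N -> (\sum_(j < n | (j < k)%N) 1 = k)%N.
Proof. by move=> kn; rewrite -(big_ord_widen n (fun=> 1%N) kn) sum1_card card_ord. Qed.

Lemma sum_perm_tperm (R : nmodType) n (F : 'S_n -> 'I_n -> R) (i j : 'I_n) :
  (forall s, F (tperm i j * s)%g =1 F s) ->
  \sum_(s : 'S_n) F s (s i) = \sum_(s : 'S_n) F s (s j).
Proof.
move=> F_tperm; rewrite (reindex_inj (mulgI (tperm i j))) /=.
by apply: eq_bigr => s _; rewrite F_tperm permM tpermL.
Qed.

Lemma ones_sum n (y : {ffun 'I_n -> bool}) : ones y = (\sum_i y i)%N.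
Proof. by rewrite /ones -sum1dep_card big_mkcond; apply: eq_bigr => i _; case: (y i). Qed.

Lemma ones_le n (y : {ffun 'I_n -> bool}) : (ones y <= n)%N.
Proof. by rewrite /ones -[n in (_ <= n)%N](card_ord n) max_card. Qed.

Lemma ones_negb n (y : {ffun 'I_n -> bool}) : ones [ffun i => ~~ y i] = (n - ones y)%N.
Proof.
rewrite /ones [in LHS]cardsCs card_ord; congr (_ - _)%N.
by apply: eq_card => i; rewrite !inE ffunE negbK.
Qed.

Lemma hyp_sample_negb n (y : {ffun 'I_n -> bool}) s k :
  hyp_sample [ffun i => ~~ y i] s k = [ffun i => ~~ hyp_sample y s k i].
Proof. by apply/ffunP => i; rewrite !ffunE addNb. Qed.

Lemma prob_perm_le (R : realType) n (E E' : pred 'S_n) :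
  (forall s, E s -> E' s) -> prob_perm R E <= prob_perm R E'.
Proof.
move=> EE'; rewrite ler_wpM2r ?invr_ge0 // ler_nat subset_leq_card //.
by apply/fintype.subsetP => s; rewrite !inE => /EE'.
Qed.

Lemma prob_perm_union_bound (R : realType) n (E A B : pred 'S_n) :
  (forall s, ~~ A s -> ~~ B s -> E s) ->
  1 - prob_perm R A - prob_perm R B <= prob_perm R E.
Proof.
move=> cover; set N := #|[set: 'S_n]|.
have N_gt0 : (0 : R) < N%:R by rewrite ltr0n /N cardsT card_Sn fact_gt0.
have count : (N <= #|[set s | E s]| + (#|[set s | A s]| + #|[set s | B s]|))%N.
  have sub : [set: 'S_n] \subset [set s | E s] :|: ([set s | A s] :|: [set s | B s]).
    apply/fintype.subsetP => s _; rewrite !inE.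
    by case As: (A s); case Bs: (B s); rewrite ?orbT //= orbF cover ?As ?Bs.
  apply: leq_trans (subset_leq_card sub) _.
  by rewrite cardsU (leq_trans (leq_subr _ _)) // leq_add2l cardsU leq_subr.
rewrite /prob_perm -/N -[X in X - _ - _ <= _](divff (lt0r_neq0 N_gt0)) -!mulrBl.
rewrite ler_pM2r ?invr_gt0 //.
by move: count; rewrite -(ler_nat R) !natrD; lra.
Qed.

Section PrefixOnes.
Variables (n : nat) (y : {ffun 'I_n -> bool}).
Implicit Types (s : {perm 'I_n}) (k : nat).

Definition prefix_ones s k : nat := \sum_(j < n | (j < k)%N) y (s j).

Lemma prefix_ones0 s : prefix_ones s 0 = 0%N.
Proof. by rewrite /prefix_ones big_pred0. Qed.

Lemma prefix_onesS s (k : 'I_n) : prefix_ones s k.+1 = (prefix_ones s k + y (s k))%N.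
Proof.
rewrite /prefix_ones (bigD1 k) //= addnC; congr (_ + _)%N.
by apply: eq_bigl => j; rewrite ltnS ltn_neqAle andbC.
Qed.

Lemma prefix_ones_tperm s k (i j : 'I_n) :
  (k <= i)%N -> (k <= j)%N -> prefix_ones (tperm i j * s)%g k = prefix_ones s k.
Proof.
move=> ki kj; apply: eq_bigr => l lk; rewrite permM tpermD //.
  by apply: contraTneq lk => <-; rewrite -leqNgt.
by apply: contraTneq lk => <-; rewrite -leqNgt.
Qed.

Lemma ones_hyp_sample s k : (k <= n)%N ->
  (ones (hyp_sample y s k) + 2 * prefix_ones s k = k + ones y)%N.
Proof.
move=> kn; rewrite !ones_sum (reindex_inj (@perm_inj _ s)) /=.
rewrite [in RHS](reindex_inj (@perm_inj _ s)) /= -[in RHS](sum1_ord_lt kn).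
rewrite /prefix_ones big_distrr /= !(big_mkcond (fun j : 'I_n => (j < k)%N)) /=.
rewrite -!big_split /=; apply: eq_bigr => j _.
rewrite ffunE /flipped mem_imset ?inE; last exact: perm_inj.
by case: (y (s j)); case: (j < k)%N.
Qed.

Lemma ones_hyp_sampleS s (k : 'I_n) :
  (ones (hyp_sample y s k) <= (ones (hyp_sample y s k.+1)).+1)%N.
Proof.
have := ones_hyp_sample s (ltnW (ltn_ord k)); have := ones_hyp_sample s (ltn_ord k).
rewrite prefix_onesS; case: (y (s k)) => /=; lia.
Qed.

Lemma ones_prefix_split s k :
  ones y = (prefix_ones s k + \sum_(j < n | ~~ (j < k)%N) y (s j))%N.
Proof. by rewrite ones_sum (reindex_inj (@perm_inj _ s)) (bigID (fun j : 'I_n => (j < k)%N)). Qed.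

Section Moments.
Variable R : realFieldType.
Implicit Types (z : R) (h : nat -> R).

Lemma sum_perm_at (k : 'I_n) :
  n%:R * \sum_(s : 'S_n) ((y (s k))%:R : R) = #|'S_n|%:R * (ones y)%:R.
Proof.
have at_any j : \sum_(s : 'S_n) ((y (s j))%:R : R) = \sum_(s : 'S_n) (y (s k))%:R.
  exact: (@sum_perm_tperm R n (fun _ i => (y i)%:R) j k (fun=> frefl _)).
have -> : n%:R * \sum_(s : 'S_n) ((y (s k))%:R : R) = \sum_(j < n) \sum_(s : 'S_n) (y (s j))%:R.
  by rewrite (eq_bigr _ (fun j _ => at_any j)) sumr_const card_ord mulr_natl.
rewrite exchange_big /= (eq_bigr (fun=> (ones y)%:R)) ?sumr_const ?mulr_natl // => s _.
by rewrite -natr_sum (ones_prefix_split s 0) prefix_ones0.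
Qed.

Lemma sum_perm_prefix_ones k : (k <= n)%N ->
  n%:R * \sum_(s : 'S_n) ((prefix_ones s k)%:R : R) = k%:R * (#|'S_n|%:R * (ones y)%:R).
Proof.
move=> kn; under eq_bigr do rewrite natr_sum.
rewrite exchange_big /= mulr_sumr (eq_bigr _ (fun j _ => sum_perm_at j)).
by rewrite sum_ord_lt_const // [RHS]mulr_natl.
Qed.

Lemma sum_perm_next_one h (k : 'I_n) :
  (n%:R - k%:R) * \sum_(s : 'S_n) h (prefix_ones s k) * (y (s k))%:R =
  \sum_(s : 'S_n) h (prefix_ones s k) * ((ones y)%:R - (prefix_ones s k)%:R).
Proof.
have rest s : ((ones y)%:R - (prefix_ones s k)%:R : R) =
              \sum_(j < n | ~~ (j < k)%N) (y (s j))%:R.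
  by rewrite (ones_prefix_split s k) natrD addrC addKr natr_sum.
under [RHS]eq_bigr do rewrite rest mulr_sumr.
rewrite exchange_big /= [RHS](eq_bigr (fun=> \sum_(s : 'S_n) h (prefix_ones s k) * (y (s k))%:R)).
  by rewrite sum_ord_ge_const 1?ltnW // -[RHS]mulr_natl natrB 1?ltnW.
move=> j jk; apply: (@sum_perm_tperm R n (fun s i => h (prefix_ones s k) * (y i)%:R)) => s i /=.
by rewrite prefix_ones_tperm // leqNgt.
Qed.

Lemma sum_perm_next_one_le h (k : 'I_n) : {homo h : i j / (i <= j)%N >-> i <= j} ->
  n%:R * \sum_(s : 'S_n) h (prefix_ones s k) * (y (s k))%:R <=
  (ones y)%:R * \sum_(s : 'S_n) h (prefix_ones s k).
Proof.
move=> h_homo.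
set m : R := (ones y)%:R; set N : R := #|'S_n|%:R.
set F := fun s : 'S_n => (prefix_ones s k)%:R : R.
set H := \sum_(s : 'S_n) h (prefix_ones s k).
set S := \sum_(s : 'S_n) h (prefix_ones s k) * (y (s k))%:R.
have negcorr : N * ((n%:R - k%:R) * S) <= H * (N * m - \sum_(s : 'S_n) F s).
  have -> : N * m - \sum_(s : 'S_n) F s = \sum_(s : 'S_n) (m - F s).
    by rewrite sumrB sumr_const mulr_natl.
  rewrite sum_perm_next_one; apply: chebyshev_sum => s s'; rewrite /F.
  case: (leqP (prefix_ones s k) (prefix_ones s' k)) => [le_ss'|/ltnW le_s's].
    by rewrite mulr_le0_ge0 // ?subr_le0 ?h_homo // subr_ge0 lerD2l lerN2 ler_nat.
  by rewrite mulr_ge0_le0 // ?subr_ge0 ?h_homo // subr_le0 lerD2l lerN2 ler_nat.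
have Nnk_gt0 : 0 < N * (n%:R - k%:R).
  by rewrite mulr_gt0 ?subr_gt0 ?ltr_nat // ltr0n card_Sn fact_gt0.
rewrite -(ler_pM2l Nnk_gt0).
have -> : N * (n%:R - k%:R) * (n%:R * S) = n%:R * (N * ((n%:R - k%:R) * S)) by ring.
apply: le_trans (ler_wpM2l (ler0n _ n) negcorr) _.
have SF := sum_perm_prefix_ones (ltnW (ltn_ord k)); rewrite -/F -/N -/m in SF.
have -> : n%:R * (H * (N * m - \sum_(s : 'S_n) F s)) =
          H * (n%:R * N * m - n%:R * \sum_(s : 'S_n) F s) by ring.
by rewrite SF [X in X <= _](_ : _ = N * (n%:R - k%:R) * (m * H)) //; ring.
Qed.

Lemma mgf_prefix_onesS z (k : 'I_n) : 0 <= z ->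
  \sum_(s : 'S_n) (1 + z) ^+ prefix_ones s k.+1 <=
  (1 + z * (ones y)%:R / n%:R) * \sum_(s : 'S_n) (1 + z) ^+ prefix_ones s k.
Proof.
move=> z_ge0; set Phi := \sum_(s : 'S_n) (1 + z) ^+ prefix_ones s k.
set S := \sum_(s : 'S_n) (1 + z) ^+ prefix_ones s k * (y (s k))%:R.
have -> : \sum_(s : 'S_n) (1 + z) ^+ prefix_ones s k.+1 = Phi + z * S.
  rewrite mulr_sumr -big_split; apply: eq_bigr => s _ /=.
  by rewrite prefix_onesS exprD; case: (y (s k)); rewrite /= ?expr0 ?mulr0 ?addr0 ?mulr1 //; ring.
have S_le : n%:R * S <= (ones y)%:R * Phi.
  by apply: sum_perm_next_one_le; apply: ler_weXn2l; rewrite lerDl.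
have n_gt0 : (0 : R) < n%:R by rewrite ltr0n (leq_ltn_trans (leq0n k)).
rewrite mulrDl mul1r lerD2l -!mulrA ler_wpM2l // mulrCA ler_pdivlMl //.
Qed.

Lemma mgf_prefix_ones z k : 0 <= z -> (k <= n)%N ->
  \sum_(s : 'S_n) (1 + z) ^+ prefix_ones s k <=
  #|'S_n|%:R * (1 + z * (ones y)%:R / n%:R) ^+ k.
Proof.
move=> z_ge0; elim: k => [_|k IH lt_k_n].
  rewrite expr0 mulr1 (eq_bigr (fun=> 1)) => [|s _]; first by rewrite sumr_const.
  by rewrite prefix_ones0.
apply: le_trans (mgf_prefix_onesS (Ordinal lt_k_n) z_ge0) _.
rewrite exprS mulrCA ler_wpM2l ?IH 1?ltnW //.
by rewrite addr_ge0 ?divr_ge0 ?mulr_ge0.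
Qed.

End Moments.

End PrefixOnes.

Lemma prefix_ones_tail (R : realType) n (y : {ffun 'I_n -> bool}) k (th t : R) :
  (0 < n)%N -> (k <= n)%N -> 0 < t ->
  (ones y)%:R / n%:R * k%:R + t <= th -> th <= n%:R ->
  prob_perm R (fun s => th <= (prefix_ones y s k)%:R) <= expR (- (t ^+ 2 / (4 * n%:R))).
Proof.
move=> n_gt0 kn t_gt0 q_t_le th_le; have n_gt0' : (0 : R) < n%:R by rewrite ltr0n.
set q := (ones y)%:R / n%:R * k%:R in q_t_le.
have q_ge0 : 0 <= q by rewrite mulr_ge0 ?divr_ge0.
set z := t / (2 * n%:R).
have z_ge0 : 0 <= z by rewrite divr_ge0 ?ltW ?mulr_gt0.
have z_le1 : z <= 1 by rewrite ler_pdivrMr ?mulr_gt0 //; lra.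
have N_gt0 : (0 : R) < #|'S_n|%:R by rewrite ltr0n card_Sn fact_gt0.
set F := fun s : 'S_n => prefix_ones y s k.
set m : R := (ones y)%:R; have m_ge0 : 0 <= m := ler0n _ _.
have markov : #|[set s | th <= (F s)%:R]|%:R * expR (th * (z - z ^+ 2)) <=
              \sum_(s : 'S_n) (1 + z) ^+ F s.
  apply: markov_card => [s|s th_le_F]; first by rewrite exprn_ge0 ?addr_ge0.
  apply: le_trans (_ : expR ((F s)%:R * (z - z ^+ 2)) <= _).
    by rewrite ler_expR ler_wpM2r // subr_ge0 expr2 ler_piMl.
  by rewrite expRM_natl; apply: lerXn2r; rewrite ?nnegrE ?expR_ge0 ?expR_sub_sqr_le ?addr_ge0.
have binomial : (1 + z * m / n%:R) ^+ k <= expR (k%:R * (z * m / n%:R)).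
  rewrite expRM_natl; apply: lerXn2r; rewrite ?nnegrE ?expR_ge0 ?expR_ge1Dx //.
  by rewrite addr_ge0 ?divr_ge0 ?mulr_ge0 // ltW.
have := le_trans markov (le_trans (mgf_prefix_ones y z_ge0 kn) (ler_wpM2l (ltW N_gt0) binomial)).
rewrite -ler_pdivlMr ?expR_gt0 // -(mulrA _ (expR _)) -expRN -expRD => A_le.
rewrite /prob_perm cardsT ler_pdivrMr // mulrC (le_trans A_le) // ler_pM2l // ler_expR.
have -> : - (t ^+ 2 / (4 * n%:R)) = - t * z + n%:R * z ^+ 2 by rewrite /z; field; rewrite gt_eqF.
have -> : k%:R * (z * m / n%:R) = q * z by rewrite /q; field; rewrite gt_eqF.
have : (q + t) * z <= th * z by rewrite ler_wpM2r.
have : th * z ^+ 2 <= n%:R * z ^+ 2 by rewrite ler_wpM2r ?sqr_ge0.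
lra.
Qed.

Lemma prob_ones_hyp_sample_le_half (R : realType) n (y : {ffun 'I_n -> bool}) k (t : R) :
  (k <= n)%N -> 0 < t -> t <= ((ones y)%:R / n%:R - 1 / 2) * (n%:R / 2 - k%:R) ->
  prob_perm R (fun s => ones (hyp_sample y s k) <= n./2)%N <= expR (- (t ^+ 2 / (4 * n%:R))).
Proof.
move=> kn t_gt0 t_le.
have n_gt0 : (0 < n)%N.
  rewrite lt0n; apply: contraTneq t_le => n0; rewrite -ltNge.
  have nR0 : (n%:R : R) = 0 by rewrite n0.
  have kR0 : (k%:R : R) = 0 by move: kn; rewrite n0 leqn0 => /eqP ->.
  by rewrite nR0 kR0 mul0r subrr mulr0.
have nR_gt0 : (0 : R) < n%:R by rewrite ltr0n.
set m : R := (ones y)%:R.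
have m_le : m <= n%:R by rewrite ler_nat ones_le.
set th := (k%:R + m - n%:R / 2) / 2.
apply: le_trans (prefix_ones_tail (y := y) (th := th) n_gt0 kn t_gt0 _ _); last 2 first.
- rewrite /th; have -> : m = m / n%:R * n%:R by rewrite divfK ?gt_eqF.
  move: t_le; rewrite -/m; set q := m / n%:R; lra.
- have : (k%:R : R) <= n%:R by rewrite ler_nat.
  rewrite /th; lra.
apply: prob_perm_le => s le_half.
have sample_eq : ((ones (hyp_sample y s k))%:R + 2 * (prefix_ones y s k)%:R = k%:R + m :> R).
  by rewrite -natrM -!natrD ones_hyp_sample.
have half : ((ones (hyp_sample y s k))%:R : R) <= n%:R / 2.
  apply: le_trans (_ : (n./2)%:R <= _); first by rewrite ler_nat.
  by rewrite ler_pdivlMr // -natrM ler_nat muln2 -[X in (_ <= X)%N](odd_double_half n) leq_addl.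
rewrite /th; lra.
Qed.

Definition hits_half_between (R : realType) n (x : {ffun 'I_n -> bool}) (s : 'S_n) (lo hi : R) :=
  [exists k : 'I_n.+1,
    [&& (1 <= k)%N, lo <= (k : nat)%:R, (k : nat)%:R <= hi & ones (hyp_sample x s k) == n./2]].

Lemma hits_half_between_of_ends (R : realType) n (x : {ffun 'I_n -> bool}) s (lo hi : R) k1 k2 :
  ~~ odd n -> (1 <= k1 <= k2)%N -> (k2 <= n)%N -> lo <= k1%:R -> k2%:R <= hi ->
  (n./2 < ones (hyp_sample x s k1))%N ->
  (n./2 < ones (hyp_sample [ffun i => ~~ x i] s k2))%N ->
  hits_half_between x s lo hi.
Proof.
move=> n_even /andP [k1_gt0 k12] k2n lo_le le_hi above below.
have n_half : n = (n./2 + n./2)%N.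
  by rewrite addnn -[LHS]odd_double_half (negbTE n_even).
rewrite hyp_sample_negb ones_negb in below.
have step i : (k1 <= i < k2)%N ->
    (ones (hyp_sample x s i) <= (ones (hyp_sample x s i.+1)).+1)%N.
  by case/andP=> _ ik2; exact: (ones_hyp_sampleS x s (Ordinal (leq_trans ik2 k2n))).
have below' : (ones (hyp_sample x s k2) <= n./2)%N.
  by move: below; rewrite [in X in (_ < X - _)%N]n_half; lia.
have [k /andP [k1k kk2] half] := exists_eq_of_step_down step k12 (ltnW above) below'.
apply/existsP; exists (Ordinal (leq_trans kk2 k2n : (k < n.+1)%N)); rewrite /= half eqxx andbT.
rewrite (leq_trans k1_gt0 k1k) (le_trans lo_le) ?ler_nat //=.
by rewrite (le_trans _ le_hi) ?ler_nat.
Qed.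

Lemma window_ends (R : realType) n (a c : R) :
  0 < c < a -> 8 * a <= n%:R * c ->
  exists k1 k2 : nat, [/\ (1 <= k1 <= k2)%N, (k2 <= n)%N,
    n%:R * (a - c) / (2 * a - c) <= k1%:R /\ k2%:R <= n%:R * a / (2 * a - c) &
    n%:R * c / 8 <= a * (n%:R / 2 - k1%:R) /\ n%:R * c / 8 <= a * (k2%:R - n%:R / 2)].
Proof.
case/andP=> c_gt0 c_lt_a large.
have d_gt0 : 0 < 2 * a - c by lra.
set v := n%:R * c / (2 * a - c).
have vd : v * (2 * a - c) = n%:R * c by rewrite /v divfK ?gt_eqF.
have -> : n%:R * (a - c) / (2 * a - c) = n%:R / 2 - v / 2.
  by rewrite /v; field; rewrite gt_eqF.
have -> : n%:R * a / (2 * a - c) = n%:R / 2 + v / 2.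
  by rewrite /v; field; rewrite gt_eqF.
have v_ge0 : 0 <= v by apply: divr_ge0; rewrite ?mulr_ge0 // ltW.
have av : n%:R * c <= 2 * a * v by have := mulr_ge0 v_ge0 (ltW c_gt0); lra.
have v_gt4 : 4 < v by rewrite -(ltr_pM2r d_gt0) vd; lra.
have v_le_n : v <= n%:R.
  by rewrite -(ler_pM2r d_gt0) vd; apply: ler_wpM2l; [exact: ler0n | lra].
have L_ge0 : 0 <= n%:R / 2 - v / 2 by lra.
have U_ge0 : 0 <= n%:R / 2 + v / 2 by lra.
set L := n%:R / 2 - v / 2 in L_ge0 *; set U := n%:R / 2 + v / 2 in U_ge0 *.
have /andP [k1_le k1_gt] := trunc_itv L_ge0.
have /andP [k2_le k2_gt] := trunc_itv U_ge0.
set k1 := (Num.trunc L).+1 in k1_gt; set k2 := Num.trunc U in k2_le k2_gt.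
have k1E : (k1%:R : R) = (Num.trunc L)%:R + 1 by rewrite natr1.
rewrite -[k2.+1%:R]natr1 in k2_gt.
move: k1E k1_le k1_gt k2_le k2_gt; rewrite /L /U => k1E k1_le k1_gt k2_le k2_gt.
have k12 : (k1%:R : R) <= k2%:R by lra.
have a_k1 : a * k1%:R <= a * (n%:R / 2 - v / 2 + 1) by rewrite ler_wpM2l //; lra.
have a_k2 : a * (n%:R / 2 + v / 2 - 1) <= a * k2%:R by rewrite ler_wpM2l //; lra.
have trunc_ge0 := ler0n R (Num.trunc L).
exists k1, k2; split; rewrite -?(ler_nat R); try (apply/andP; split); try split; lra.
Qed.

Lemma prob_hits_half_between (R : realType) n (x : {ffun 'I_n -> bool}) (a c : R) :
  ~~ odd n -> 0 < c < a -> (ones x)%:R = (1 / 2 + a) * n%:R -> 8 * a <= n%:R * c ->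
  1 - 2 * expR (- (n%:R * c ^+ 2 / 256)) <=
  prob_perm R (fun s => hits_half_between x s
                 (n%:R * (a - c) / (2 * a - c)) (n%:R * a / (2 * a - c))).
Proof.
move=> n_even ca ones_x large.
have [k1 [k2 [k12 k2n [lo_k1 k2_hi] [margin1 margin2]]]] := window_ends ca large.
case/andP: ca => c_gt0 c_lt_a.
have n_gt0 : (0 : R) < n%:R by rewrite -(pmulr_lgt0 _ c_gt0); lra.
set t := n%:R * c / 8.
have t_gt0 : 0 < t by rewrite divr_gt0 ?mulr_gt0.
have et : t ^+ 2 / (4 * n%:R) = n%:R * c ^+ 2 / 256 by rewrite /t; field; rewrite gt_eqF.
have k1n : (k1 <= n)%N by case/andP: k12 => _ k12; exact: leq_trans k12 k2n.
have bad1 := prob_ones_hyp_sample_le_half (y := x) k1n t_gt0.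
have bad2 := prob_ones_hyp_sample_le_half (y := [ffun i => ~~ x i]) k2n t_gt0.
rewrite et in bad1 bad2.
have mean1 : (ones x)%:R / n%:R - 1 / 2 = a.
  by rewrite ones_x mulfK ?gt_eqF //; lra.
have mean2 : (ones [ffun i => ~~ x i])%:R / n%:R - 1 / 2 = - a.
  rewrite ones_negb natrB ?ones_le // ones_x.
  by field; rewrite gt_eqF.
rewrite mean1 in bad1; rewrite mean2 in bad2.
have {}bad1 := bad1 margin1.
have margin2' : t <= - a * (n%:R / 2 - k2%:R) by rewrite /t; lra.
have {}bad2 := bad2 margin2'.
have cover s : ~~ (ones (hyp_sample x s k1) <= n./2)%N ->
    ~~ (ones (hyp_sample [ffun i => ~~ x i] s k2) <= n./2)%N ->
    hits_half_between x s (n%:R * (a - c) / (2 * a - c)) (n%:R * a / (2 * a - c)).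
  by rewrite -!ltnNge; apply: hits_half_between_of_ends.
apply: le_trans (prob_perm_union_bound R cover); lra.
Qed.

Theorem theorem3 (R : realType) (a : R) (c : nat -> R) :
  0 < a ->
  (forall n : nat, 0 < c n < a) ->
  (* c = omega(sqrt(log n / n)) *)
  (forall M : R, 0 < M -> exists N : nat, forall n : nat, (N <= n)%N ->
      M * Num.sqrt (ln n%:R / n%:R) < c n) ->
  (* probability 1 - e^{-Omega(n c^2)} *)
  exists C : R, 0 < C /\ exists N : nat,
    forall (n : nat) (x : {ffun 'I_n -> bool}),
      (N <= n)%N -> ~~ odd n ->
      (ones x)%:R = (1 / 2 + a) * n%:R ->
      1 - expR (- (C * n%:R * c n ^+ 2)) <=
      prob_perm R (fun s : {perm 'I_n} =>
        [exists k : 'I_n.+1,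
          [&& (1 <= k)%N,
              n%:R * (a - c n) / (2 * a - c n) <= (k : nat)%:R,
              (k : nat)%:R <= n%:R * a / (2 * a - c n) &
              ones (hyp_sample x s k) == n./2]]).
Proof.
move=> a_gt0 c_bounds omega.
(* 512 lets the union bound absorb its factor 2, and 8 a^2 forces n c >= 8 a. *)
have [N large_nc2] := eventually_lt_mul_sqr (512 + 8 * a ^+ 2) omega.
exists (1 / 512); split; first by rewrite divr_gt0 ?ltr0n.
exists N => n x Nn n_even ones_x.
have /andP [c_gt0 c_lt_a] := c_bounds n.
have nc2_gt := large_nc2 n Nn.
have large_nc : 8 * a <= n%:R * c n.
  rewrite -(ler_pM2r a_gt0).
  have := ler_wpM2l (mulr_ge0 (ler0n R n) (ltW c_gt0)) (ltW c_lt_a).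
  rewrite expr2 mulrA in nc2_gt; lra.
apply: le_trans (prob_hits_half_between n_even (c_bounds n) ones_x large_nc).
rewrite lerD2l lerN2 -[1 / 512 * _ * _]mulrA; apply: two_expR_le.
by have := sqr_ge0 a; lra.
Qed.
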